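(* Let $\mathfrak{A}[\tau]$ be a topological partial *-algebra with multiplication core $\mathfrak{B}$, and let $\omega$ be a $\tau$-continuous, $\mathfrak{B}$-positive linear functional on $\mathfrak{A}$. Then the map $\lambda^0_\omega:a\in\mathfrak{B}\mapsto\lambda^0_\omega(a)\in\mathcal{H}_\omega$ is $\tau^*$-closable; that is, whenever $\{a_\delta\}\subset\mathfrak{B}$ is a net with $a_\delta\to0$ in $\tau^*$ and $\{\lambda^0_\omega(a_\delta)\}$ is a Cauchy net in $\mathcal{H}_\omega$, then $\lambda^0_\omega(a_\delta)\to0$.
   Context: A partial *-algebra is a complex vector space $\mathfrak{A}$ with conjugate-linear involution and distributive partial multiplication on $\Gamma\subset\mathfrak{A}\times\mathfrak{A}$ with $(x,y)\in\Gamma$ iff $(y^*,x^* )\in\Gamma$, then $(xy)^*=y^*x^*$; $R(x)=\{y:(x,y)\in\Gamma\}$; $R\mathfrak{A}$ is the set of universal right multipliers. A topological partial *-algebra: Hausdorff locally convex topology $\tau$ such that each map $y\in R(x)\mapsto xy$ is closed (if $y_\alpha\in R(x)$, $y_\alpha\to y$, $xy_\alpha\to z$, then $y\in R(x)$, $z=xy$). $\tau^*$ is the topology given by the seminorms $\max\{p(x),p(x^* )\}$, $p$ a $\tau$-continuous seminorm. A multiplication core is a subspace $\mathfrak{B}\subseteq R\mathfrak{A}$ with: $e\in\mathfrak{B}$ if $\mathfrak{A}$ has a unit $e$; $\mathfrak{B}\mathfrak{B}\subseteq\mathfrak{B}$; $\mathfrak{B}$ $\tau^*$-dense in $\mathfrak{A}$;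 $x\mapsto xb$ $\tau$-continuous for $b\in\mathfrak{B}$; $b^*(xc)=(b^*x)c$ for $x\in\mathfrak{A}$, $b,c\in\mathfrak{B}$. A linear functional $\omega$ is $\mathfrak{B}$-positive if $\omega(a^*a)\ge0$ for all $a\in\mathfrak{B}$. Then $N_\omega=\{x\in\mathfrak{B}:\omega(y^*x)=0\ \forall y\in\mathfrak{B}\}$, $\lambda^0_\omega(x)=x+N_\omega$ ($x\in\mathfrak{B}$), and $\mathcal{H}_\omega$ is the Hilbert space completion of $\mathfrak{B}/N_\omega$ with inner product $\langle\lambda^0_\omega(x),\lambda^0_\omega(y)\rangle=\omega(y^*x)$. *)

From mathcomp Require Import all_boot all_order all_algebra complex reals.
Import Order.TTheory GRing.Theory Num.Theory.
Set Implicit Arguments.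
Unset Strict Implicit.
Unset Printing Implicit Defensive.
Local Open Scope ring_scope.

Definition directed (D : Type) (le : D -> D -> Prop) : Prop :=
  (exists d : D, True) /\ (forall a, le a a) /\
  (forall a b c, le a b -> le b c -> le a c) /\
  (forall a b, exists c, le a c /\ le b c).

Definition eventually (D : Type) (le : D -> D -> Prop) (P : D -> Prop) : Prop :=
  exists d0, forall d, le d0 d -> P d.

Definition rconv (R : realType) (D : Type) (le : D -> D -> Prop)
  (xs : D -> R) (x : R) : Prop :=
  forall e : R, 0 < e -> eventually le (fun d => `|xs d - x| < e).

Definition cconv (R : realType) (D : Type) (le : D -> D -> Prop)
  (zs : D -> R[i]) (z : R[i]) : Prop :=
  forall e : R, 0 < e -> eventually le (fun d => `|zs d - z| < (e%:C)%C).

Definition is_seminorm (R : realType) (A : lmodType R[i]) (q : A -> R) : Prop :=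
  (forall x y, q (x + y) <= q x + q y) /\
  (forall (a : R[i]) x, ((q (a *: x))%:C)%C = `|a| * ((q x)%:C)%C).

(* The Hausdorff locally convex topology tau on A generated by the
   family of seminorms (p i)_{i : I}. *)
Definition is_lc_hausdorff (R : realType) (A : lmodType R[i])
  (I : Type) (p : I -> A -> R) : Prop :=
  (forall i, is_seminorm (p i)) /\
  (forall x : A, (forall i, p i x = 0) -> x = 0).

Definition tconv (R : realType) (A : lmodType R[i]) (I : Type)
  (p : I -> A -> R) (D : Type) (le : D -> D -> Prop)
  (xs : D -> A) (x : A) : Prop :=
  forall i, rconv le (fun d => p i (xs d - x)) 0.

Definition tcont_AA (R : realType) (A : lmodType R[i]) (I : Type)
  (p : I -> A -> R) (f : A -> A) : Prop :=
  forall (D : Type) (le : D -> D -> Prop) (xs : D -> A) (x : A),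
    directed le -> tconv p le xs x -> tconv p le (fun d => f (xs d)) (f x).

Definition tcont_AR (R : realType) (A : lmodType R[i]) (I : Type)
  (p : I -> A -> R) (f : A -> R) : Prop :=
  forall (D : Type) (le : D -> D -> Prop) (xs : D -> A) (x : A),
    directed le -> tconv p le xs x -> rconv le (fun d => f (xs d)) (f x).

Definition tcont_AC (R : realType) (A : lmodType R[i]) (I : Type)
  (p : I -> A -> R) (f : A -> R[i]) : Prop :=
  forall (D : Type) (le : D -> D -> Prop) (xs : D -> A) (x : A),
    directed le -> tconv p le xs x -> cconv le (fun d => f (xs d)) (f x).

Definition tstar_conv (R : realType) (A : lmodType R[i]) (I : Type)
  (p : I -> A -> R) (inv : A -> A) (D : Type) (le : D -> D -> Prop)
  (xs : D -> A) (x : A) : Prop :=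
  forall q : A -> R, is_seminorm q -> tcont_AR p q ->
    rconv le (fun d => Num.max (q (xs d - x)) (q (inv (xs d - x)))) 0.

(* inv = involution x |-> x^*, Gam = the set Gamma of composable pairs,
   pmul x y = the product xy (meaningful only when Gam x y). *)
Definition is_partial_star_algebra (R : realType) (A : lmodType R[i])
  (inv : A -> A) (Gam : A -> A -> Prop) (pmul : A -> A -> A) : Prop :=
  (forall (a : R[i]) x y, inv (a *: x + y) = a^* *: inv x + inv y) /\
  (forall x, inv (inv x) = x) /\
  (forall x y, Gam x y <-> Gam (inv y) (inv x)) /\
  (forall x y1 y2 (a b : R[i]), Gam x y1 -> Gam x y2 ->
     Gam x (a *: y1 + b *: y2) /\
     pmul x (a *: y1 + b *: y2) = a *: pmul x y1 + b *: pmul x y2) /\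
  (forall x1 x2 y (a b : R[i]), Gam x1 y -> Gam x2 y ->
     Gam (a *: x1 + b *: x2) y /\
     pmul (a *: x1 + b *: x2) y = a *: pmul x1 y + b *: pmul x2 y) /\
  (forall x y, Gam x y -> inv (pmul x y) = pmul (inv y) (inv x)).

Definition right_mult (A : Type) (Gam : A -> A -> Prop) (x : A) : A -> Prop :=
  fun y => Gam x y.
Definition univ_right_mult (A : Type) (Gam : A -> A -> Prop) : A -> Prop :=
  fun y => forall x, Gam x y.

Definition is_unit (A : Type) (Gam : A -> A -> Prop) (pmul : A -> A -> A)
  (e : A) : Prop :=
  forall x, Gam e x /\ Gam x e /\ pmul e x = x /\ pmul x e = x.

Definition is_topological_psa (R : realType) (A : lmodType R[i])
  (inv : A -> A) (Gam : A -> A -> Prop) (pmul : A -> A -> A)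
  (I : Type) (p : I -> A -> R) : Prop :=
  is_partial_star_algebra inv Gam pmul /\
  is_lc_hausdorff p /\
  (forall (x : A) (D : Type) (le : D -> D -> Prop) (ys : D -> A) (y z : A),
     directed le -> (forall d, right_mult Gam x (ys d)) ->
     tconv p le ys y -> tconv p le (fun d => pmul x (ys d)) z ->
     right_mult Gam x y /\ z = pmul x y).

Definition is_multiplication_core (R : realType) (A : lmodType R[i])
  (inv : A -> A) (Gam : A -> A -> Prop) (pmul : A -> A -> A)
  (I : Type) (p : I -> A -> R) (B : A -> Prop) : Prop :=
  B 0 /\ (forall (a : R[i]) x y, B x -> B y -> B (a *: x + y)) /\
  (forall x, B x -> univ_right_mult Gam x) /\
  (forall e, is_unit Gam pmul e -> B e) /\
  (forall x y, B x -> B y -> B (pmul x y)) /\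
  (forall x : A, exists (D : Type) (le : D -> D -> Prop) (xs : D -> A),
     directed le /\ (forall d, B (xs d)) /\ tstar_conv p inv le xs x) /\
  (forall b, B b -> tcont_AA p (fun x => pmul x b)) /\
  (forall x b c, B b -> B c ->
     pmul (inv b) (pmul x c) = pmul (pmul (inv b) x) c).

Definition is_linear_functional (R : realType) (A : lmodType R[i])
  (omega : A -> R[i]) : Prop :=
  forall (a : R[i]) x y, omega (a *: x + y) = a * omega x + omega y.

Definition B_positive (R : realType) (A : lmodType R[i])
  (inv : A -> A) (pmul : A -> A -> A) (B : A -> Prop) (omega : A -> R[i]) : Prop :=
  forall a, B a -> 0 <= omega (pmul (inv a) a).

(* The norm in H_omega of lambda^0_omega(a) = a + N_omega, a in B:
   ||lambda^0_omega(a)|| = <lambda^0_omega(a), lambda^0_omega(a)>^(1/2)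
                         = omega(a^* a)^(1/2).
   Since lambda^0_omega is linear, the H_omega-distance between
   lambda^0_omega(a) and lambda^0_omega(b) is lambda0_norm (a - b). *)
Definition lambda0_norm (R : realType) (A : lmodType R[i])
  (inv : A -> A) (pmul : A -> A -> A) (omega : A -> R[i]) (a : A) : R :=
  Num.sqrt (complex.Re (omega (pmul (inv a) a))).

Definition lambda0_cauchy (R : realType) (A : lmodType R[i])
  (inv : A -> A) (pmul : A -> A -> A) (omega : A -> R[i])
  (D : Type) (le : D -> D -> Prop) (xs : D -> A) : Prop :=
  forall e : R, 0 < e -> exists d0, forall d d', le d0 d -> le d0 d' ->
    lambda0_norm inv pmul omega (xs d - xs d') < e.

Definition lambda0_to0 (R : realType) (A : lmodType R[i])
  (inv : A -> A) (pmul : A -> A -> A) (omega : A -> R[i])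
  (D : Type) (le : D -> D -> Prop) (xs : D -> A) : Prop :=
  forall e : R, 0 < e -> eventually le (fun d => lambda0_norm inv pmul omega (xs d) < e).

From mathcomp Require Import all_boot all_order all_algebra complex reals.
From mathcomp Require Import ring lra.
Import Order.TTheory GRing.Theory Num.Theory.
Set Implicit Arguments.
Unset Strict Implicit.
Unset Printing Implicit Defensive.
Local Open Scope ring_scope.

(* For a fixed [u] in B, the net [a_d^* u] tends to [0 u = 0] in tau, because
   [a_d -> 0] in tau^* gives [a_d^* -> 0] in tau and right multiplication by
   an element of B is continuous; by continuity of omega, [omega (a_d^* u) -> 0].
   Positivity of omega makes [Re omega(x^* y)] symmetric in [x, y] (polarize
   with [u + i v]), so expanding [omega ((u - v)^* (u - v))] gives
     [omega (u^* u) <= omega ((u - v)^* (u - v)) + 2 Re omega (v^* u)].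
   With [u = a_d] and [v = a_d'] for [d'] far enough out, the first term is
   small by the Cauchy property and the second by the convergence above. *)

Lemma sqrtr_lt (R : rcfType) (x e : R) : 0 < e -> (Num.sqrt x < e) = (x < e ^+ 2).
Proof.
move=> e_gt0.
by rewrite -[in LHS](ger0_norm (ltW e_gt0)) -sqrtr_sqr ltr_sqrt ?exprn_gt0.
Qed.

Lemma Re_lt_normc (R : rcfType) (z : R[i]) (e : R) :
  `|z| < (e%:C)%C -> complex.Re z < e.
Proof.
move=> z_lt; apply: le_lt_trans (ler_norm (complex.Re z)) _.
by rewrite -ltcR; apply: le_lt_trans (normc_ge_Re z) z_lt.
Qed.

Lemma Re_ge0 (R : rcfType) (z : R[i]) : 0 <= z -> 0 <= complex.Re z.
Proof. by rewrite lecE => /andP[]. Qed.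

Section Seminorm.
Variables (R : realType) (A : lmodType R[i]) (q : A -> R).
Hypothesis q_seminorm : is_seminorm q.

Lemma seminorm0 : q 0 = 0.
Proof.
by have /(congr1 (@complex.Re R)) := q_seminorm.2 0 0; rewrite scale0r normr0 mul0r.
Qed.

Lemma seminormN x : q (- x) = q x.
Proof.
have /(congr1 (@complex.Re R)) := q_seminorm.2 (-1) x.
by rewrite scaleN1r normrN1 mul1r.
Qed.

Lemma seminorm_ge0 x : 0 <= q x.
Proof. have := q_seminorm.1 x (- x); rewrite subrr seminorm0 seminormN; lra. Qed.

Lemma seminorm_lipschitz x y : `|q x - q y| <= q (x - y).
Proof.
have := q_seminorm.1 (x - y) y; have := q_seminorm.1 (y - x) x.
rewrite !subrK -opprB seminormN ler_norml => ? ?.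
by apply/andP; split; lra.
Qed.

End Seminorm.

Section Topology.
Variables (R : realType) (A : lmodType R[i]) (I : Type) (p : I -> A -> R).
Hypothesis p_lc : is_lc_hausdorff p.

Lemma seminorm_tcont i : tcont_AR p (p i).
Proof.
move=> D le xs x _ xs_x e e_gt0.
have [d0 near_d0] := xs_x i e e_gt0; exists d0 => d /near_d0.
rewrite subr0 ger0_norm; last exact: (seminorm_ge0 (p_lc.1 i)).
have := seminorm_lipschitz (p_lc.1 i) (xs d) x.
rewrite ler_norml ltr_norml => /andP[? ?] ?.
by apply/andP; split; lra.
Qed.

Lemma tstar_conv0_inv (inv : A -> A) (D : Type) (le : D -> D -> Prop) (xs : D -> A) :
  tstar_conv p inv le xs 0 -> tconv p le (fun d => inv (xs d)) 0.
Proof.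
move=> xs_0 i e e_gt0.
have [d0 near_d0] := xs_0 (p i) (p_lc.1 i) (seminorm_tcont i) e e_gt0.
exists d0 => d /near_d0; rewrite !subr0.
have pi_ge0 := seminorm_ge0 (p_lc.1 i).
rewrite !ger0_norm ?le_max ?pi_ge0 //.
by rewrite gt_max => /andP[].
Qed.

End Topology.

Section Functional.
Variables (R : realType) (A : lmodType R[i]) (omega : A -> R[i]).
Hypothesis omega_lin : is_linear_functional omega.

Lemma omega0 : omega 0 = 0.
Proof.
have := omega_lin 1 0 0; rewrite scale1r addr0 mul1r.
by move/(congr1 (fun z => z - omega 0)); rewrite subrr addrK.
Qed.

Lemma omegaD x y : omega (x + y) = omega x + omega y.
Proof. by rewrite -{1}(scale1r x) omega_lin mul1r. Qed.

Lemma omegaZ a x : omega (a *: x) = a * omega x.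
Proof. by rewrite -(addr0 (a *: x)) omega_lin omega0 addr0. Qed.

End Functional.

Section PartialStarAlgebra.
Variables (R : realType) (A : lmodType R[i]) (inv : A -> A)
  (Gam : A -> A -> Prop) (pmul : A -> A -> A).
Hypothesis A_psa : is_partial_star_algebra inv Gam pmul.

Lemma inv0 : inv 0 = 0.
Proof.
have := A_psa.1 1 0 0; rewrite scale1r addr0 rmorph1 scale1r.
by move/(congr1 (fun z => z - inv 0)); rewrite subrr addrK.
Qed.

Lemma invZ a x : inv (a *: x) = Num.conj a *: inv x.
Proof. by rewrite -(addr0 (a *: x)) A_psa.1 inv0 addr0. Qed.

Lemma pmul0l y : Gam 0 y -> pmul 0 y = 0.
Proof.
move=> G0y; have [_ ] := A_psa.2.2.2.2.1 0 0 y 0 0 G0y G0y.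
by rewrite !scale0r addr0.
Qed.

Section Form.
Variables (B : A -> Prop) (omega : A -> R[i]).
Hypothesis B_comb : forall (a : R[i]) x y, B x -> B y -> B (a *: x + y).
Hypothesis B_right_mult : forall x, B x -> univ_right_mult Gam x.
Hypothesis omega_lin : is_linear_functional omega.

Let B_comb2 (a b : R[i]) u v : B u -> B v -> B (a *: u + b *: v).
Proof.
move=> Bu Bv; have B0 : B 0 by rewrite -(addNr v) -scaleN1r; apply: B_comb.
by apply: B_comb => //; rewrite -[_ *: v]addr0; apply: B_comb.
Qed.

Definition omega_form (x y : A) : R[i] := omega (pmul (inv x) y).

Lemma omega_formDr u v w a b : B v -> B w ->
  omega_form u (a *: v + b *: w) = a * omega_form u v + b * omega_form u w.
Proof.
move=> Bv Bw; have [_ [_ [_ [lin_r _]]]] := A_psa; rewrite /omega_form.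
have [_ ->] := lin_r (inv u) v w a b (B_right_mult Bv _) (B_right_mult Bw _).
by rewrite (omegaD omega_lin) !(omegaZ omega_lin).
Qed.

Lemma omega_formDl u v w a b : B w ->
  omega_form (a *: u + b *: v) w =
  Num.conj a * omega_form u w + Num.conj b * omega_form v w.
Proof.
move=> Bw; have [inv_lin [_ [_ [_ [lin_l _]]]]] := A_psa.
rewrite /omega_form inv_lin invZ.
have [_ ->] := lin_l (inv u) (inv v) w (Num.conj a) (Num.conj b)
  (B_right_mult Bw _) (B_right_mult Bw _).
by rewrite (omegaD omega_lin) !(omegaZ omega_lin).
Qed.

Lemma omega_form_expand u v a b : B u -> B v ->
  omega_form (a *: u + b *: v) (a *: u + b *: v) =
  Num.conj a * (a * omega_form u u + b * omega_form u v)
  + Num.conj b * (a * omega_form v u + b * omega_form v v).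
Proof.
move=> Bu Bv; rewrite omega_formDl; last exact: B_comb2.
by rewrite (omega_formDr u a b Bu Bv) (omega_formDr v a b Bu Bv).
Qed.

Hypothesis omega_pos : forall x, B x -> 0 <= omega_form x x.

Lemma Re_omega_formC u v : B u -> B v ->
  complex.Re (omega_form u v) = complex.Re (omega_form v u).
Proof.
move=> Bu Bv.
have conj_i : Num.conj ('i%C : R[i]) = - 'i%C.
  by apply/eqP; rewrite eq_complex /= oppr0 !eqxx.
have := ger0_Im (omega_pos (B_comb2 1 'i%C Bu Bv)).
rewrite omega_form_expand // rmorph1 conj_i.
move: (ger0_Im (omega_pos Bu)) (ger0_Im (omega_pos Bv)).
case: (omega_form u u) (omega_form u v) (omega_form v u) (omega_form v v) =>
  ? ? [? ?] [? ?] [? ?] /=; lra.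
Qed.

Lemma Re_omega_form_le u v : B u -> B v ->
  complex.Re (omega_form u u) <=
  complex.Re (omega_form (u - v) (u - v)) + 2 * complex.Re (omega_form v u).
Proof.
move=> Bu Bv.
have -> : u - v = 1 *: u + (-1) *: v by rewrite scale1r scaleN1r.
rewrite omega_form_expand // rmorph1 rmorphN1.
move: (Re_omega_formC Bu Bv) (Re_ge0 (omega_pos Bv)).
case: (omega_form u u) (omega_form u v) (omega_form v u) (omega_form v v) =>
  ? ? [? ?] [? ?] [? ?] /=; lra.
Qed.

End Form.
End PartialStarAlgebra.

Lemma omega_pmulr_conv0 (R : realType) (A : lmodType R[i]) (inv : A -> A)
  (Gam : A -> A -> Prop) (pmul : A -> A -> A) (I : Type) (p : I -> A -> R)
  (omega : A -> R[i]) (u : A) :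
  is_partial_star_algebra inv Gam pmul -> Gam 0 u ->
  tcont_AA p (fun x => pmul x u) ->
  is_linear_functional omega -> tcont_AC p omega ->
  forall (D : Type) (le : D -> D -> Prop) (xs : D -> A),
    directed le -> tconv p le xs 0 -> cconv le (fun d => omega (pmul (xs d) u)) 0.
Proof.
move=> A_psa G0u mulu_cont omega_lin omega_cont D le xs le_dir xs_0.
have := omega_cont D le _ _ le_dir (mulu_cont D le xs 0 le_dir xs_0).
by rewrite /= (pmul0l A_psa G0u) (omega0 omega_lin).
Qed.

Theorem proposition4p9 (R : realType) (A : lmodType R[i])
  (inv : A -> A) (Gam : A -> A -> Prop) (pmul : A -> A -> A)
  (I : Type) (p : I -> A -> R) (B : A -> Prop) (omega : A -> R[i]) :
  is_topological_psa inv Gam pmul p ->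
  is_multiplication_core inv Gam pmul p B ->
  is_linear_functional omega ->
  tcont_AC p omega ->
  B_positive inv pmul B omega ->
  forall (D : Type) (le : D -> D -> Prop) (a : D -> A),
    directed le ->
    (forall d, B (a d)) ->
    tstar_conv p inv le a 0 ->
    lambda0_cauchy inv pmul omega le a ->
    lambda0_to0 inv pmul omega le a.
Proof.
move=> [A_psa [p_lc _]] [_ [B_comb [B_right_mult [_ [_ [_ [B_rcont _]]]]]]].
move=> omega_lin omega_cont omega_pos D le a le_dir Ba a_0 a_cauchy e e_gt0.
have [d0 cauchy_d0] := a_cauchy (e / 2) ltac:(lra).
exists d0 => d d0_d.
have form_0 := omega_pmulr_conv0 A_psa (B_right_mult _ (Ba d) 0)
  (B_rcont _ (Ba d)) omega_lin omega_cont le_dir (tstar_conv0_inv p_lc a_0).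
have [d1 form_d1] := form_0 (e ^+ 2 / 4) ltac:(nra).
have [d' [d0_d' d1_d']] := le_dir.2.2.2 d0 d1.
have := Re_omega_form_le A_psa B_comb B_right_mult omega_lin omega_pos (Ba d) (Ba d').
have := Re_lt_normc (form_d1 _ d1_d'); rewrite subr0.
have := cauchy_d0 _ _ d0_d d0_d'.
rewrite /lambda0_norm /omega_form !sqrtr_lt ?divr_gt0 //.
nra.
Qed.
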